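(* Let $S$ be a standard skew tableau with $m$ cells and $b$ nonempty rows whose lengths weakly decrease from top to bottom, and let $w_1,\dots,w_b$ be the words of entries of the rows of $S$ read left to right, with $w_1$ the bottom row and $w_b$ the top row. For $1\le j\le b$ and $k\ge1$ put $T_j^{(k)}=P(w_1^{(k)}w_2^{(k)}\cdots w_j^{(k)})$. Then for every $j=2,\dots,b$ and every $k\ge 2b-2$, the tableau $T_j^{(k)}$ has exactly $j$ rows, and - for $i=1,\dots,j-1$, row $i$ of $T_j^{(k)}$ is $x_i\,(w_{j+1-i}+(j-2+i)m)^{(k-j+2-i)}$, - row $j$ of $T_j^{(k)}$ is $x_j\,(w_1+(2j-3)m)^{(k-2j+3)}$, where each $x_i$ is an increasing word with letters in $[(j-2+i)m]$ (the words $x_i$ may have different lengths).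
   Context: $P(w)$ is the Robinson–Schensted row-insertion tableau of $w$; rows are indexed from top to bottom. For a word $y$, $y+m$ adds $m$ to every letter, and $y^{(k)}=y\,(y+m)\,(y+2m)\cdots(y+(k-1)m)$ with $m=|S|$; juxtaposition is concatenation. *)

From mathcomp Require Import all_boot.
Set Implicit Arguments. Unset Strict Implicit. Unset Printing Implicit Defensive.

(* A tableau is a list of rows, listed from top to bottom; rows are words. *)

Fixpoint bump (x : nat) (r : seq nat) : option (nat * seq nat) :=
  match r with
  | [::] => None
  | y :: r' =>
      if x < y then Some (y, x :: r')
      else match bump x r' with
           | None => None
           | Some (z, r'') => Some (z, y :: r'')
           end
  end.

Fixpoint rs_insert (t : seq (seq nat)) (x : nat) : seq (seq nat) :=
  match t with
  | [::] => [:: [:: x]]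
  | r :: t' =>
      match bump x r with
      | None => rcons r x :: t'
      | Some (y, r') => r' :: rs_insert t' y
      end
  end.

Definition P (w : seq nat) : seq (seq nat) := foldl rs_insert [::] w.

Definition shiftw (y : seq nat) (c : nat) : seq nat := map (addn c) y.

(* y^(k) = y (y+m) (y+2m) ... (y+(k-1)m). *)
Definition kpow (y : seq nat) (m k : nat) : seq nat :=
  flatten [seq shiftw y (i * m) | i <- iota 0 k].

(* A skew tableau with b rows is given by
   mu   : the left offsets of rows (top to bottom), i.e. the inner shape mu,
   rows : the entries of each row read left to right (top to bottom).
   The outer shape is lambda_r = mu_r + size rows_r. *)
Definition in_cell (mu : seq nat) (rows : seq (seq nat)) (r c : nat) : bool :=
  (nth 0 mu r <= c) && (c < nth 0 mu r + size (nth [::] rows r)).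

Definition entry (mu : seq nat) (rows : seq (seq nat)) (r c : nat) : nat :=
  nth 0 (nth [::] rows r) (c - nth 0 mu r).

Definition is_standard_skew_tableau (mu : seq nat) (rows : seq (seq nat)) : Prop :=
  size mu = size rows /\
  [/\
      sorted geq mu,
      sorted geq [seq nth 0 mu r + size (nth [::] rows r) | r <- iota 0 (size rows)],
      perm_eq (flatten rows) (iota 1 (size (flatten rows))),
      all (sorted ltn) rows &
      (forall r c, r.+1 < size rows -> in_cell mu rows r c -> in_cell mu rows r.+1 c ->
        entry mu rows r c < entry mu rows r.+1 c)].

From Pilot Require Import Defs.
From mathcomp Require Import all_boot zify.
Set Implicit Arguments. Unset Strict Implicit. Unset Printing Implicit Defensive.

(* Let u_0, ..., u_(n-1) be the rows w_1, ..., w_j of S, bottom row first, and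
   C_p = u_p^(k), so that T = P(C_0 ... C_(n-1)).

   1. Row-inserting an increasing word V into an increasing row R disjoint
      from it bumps exactly the letters z of R that are "outcounted": some
      interval [y, z) contains more letters of V than of R (insert_word_inv);
      and P(W) is the first row followed by P(bumped word) (P_cons).
   2. For an increasing word u with letters in [1, m], every window
      [y, y + m) inside [1, k m] holds exactly |u| letters of u^(k)
      (count_window).
   3. Hence if R agrees with u^(k) and V with v^(k) above t m, u and v are
      disjoint and |u| <= |v|, then after the insertion the row agrees with
      v^(k) and the bumped word with u^(k) above (t + 1) m
      (insert_agree_step).
   4. Iterating 3 over C_0, ..., C_(n-1) describes the first row and the
      bumped word (first_row_agree); induction on n describes all rows
      (tableau_agree); an increasing row agreeing with u^(k) above t m is
      x ++ (u + t m)^(k - t) (split_agree_row). This gives kpow_tableau for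
      any admissible family, and the rows of S form one
      (skew_rows_admissible). *)

Lemma sorted_ltn_cat (s1 s2 : seq nat) : sorted ltn s1 -> sorted ltn s2 ->
  (forall x y, x \in s1 -> y \in s2 -> x < y) -> sorted ltn (s1 ++ s2).
Proof.
move=> h1 h2 h; rewrite sorted_pairwise; last exact: ltn_trans.
rewrite pairwise_cat -!sorted_pairwise ?h1 ?h2 ?andbT; try exact: ltn_trans.
by apply/allrelP => x y; apply: h.
Qed.

Lemma sorted_ltn_uniq (s : seq nat) : sorted ltn s -> uniq s.
Proof. by apply: sorted_uniq; [exact: ltn_trans | exact: ltnn]. Qed.

Lemma sorted_ltn_rcons (s : seq nat) x : sorted ltn (rcons s x) ->
  sorted ltn s /\ (forall v, v \in s -> v < x).
Proof.
rewrite -cats1 sorted_pairwise; last exact: ltn_trans.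
rewrite pairwise_cat -sorted_pairwise; last exact: ltn_trans.
by case/and3P => /allrelP ha hs _; split => // v hv; apply: ha; rewrite ?inE.
Qed.

Lemma bump_spec (x : nat) (r : seq nat) : sorted ltn r -> x \notin r ->
  match Defs.bump x r with
  | None => forall z, z \in r -> z < x
  | Some (y, r') => [/\ y \in r, x < y, (forall z, z \in r -> x < z -> y <= z),
                       perm_eq (x :: r) (y :: r') & sorted ltn r']
  end.
Proof.
elim: r => [|a r IH] //=.
rewrite inE negb_or => hs /andP[hxa hxr].
have /andP[hall hr] : all (ltn a) r && sorted ltn r.
  by move: hs; rewrite /= path_sortedE //; exact: ltn_trans.
case: ltnP => hx.
  split; rewrite ?inE ?eqxx //.
  - move=> z; rewrite inE => /orP[/eqP->//|hz] _.
    by apply: ltnW; move/allP: hall; apply.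
  - exact: (permEl (perm_catCA [:: x] [:: a] r)).
  - rewrite /= path_sortedE; last exact: ltn_trans.
    rewrite hr andbT; apply/allP => z hz; apply: ltn_trans hx _.
    by move/allP: hall; apply.
have hax : a < x by rewrite ltn_neqAle hx eq_sym hxa.
move: (IH hr hxr); case: (Defs.bump x r) => [[y r']|] /=; last first.
  by move=> h z; rewrite inE => /orP[/eqP->//|]; exact: h.
case=> hy hxy hmin hp hs'; split.
- by rewrite inE hy orbT.
- done.
- move=> z; rewrite inE => /orP[/eqP->|hz] hxz; last exact: hmin.
  by move: (ltn_trans hax hxz); rewrite ltnn.
- apply: (perm_trans (permEl (perm_catCA [:: x] [:: a] r))).
  apply: (@perm_trans _ (a :: y :: r')); first by rewrite perm_cons.
  exact: (permEl (perm_catCA [:: a] [:: y] r')).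
- rewrite /= path_sortedE ?hs' ?andbT; last exact: ltn_trans.
  apply/allP => z hz.
  have : z \in x :: r by rewrite (perm_mem hp) inE hz orbT.
  by rewrite inE => /orP[/eqP->//|]; move/allP: hall; apply.
Qed.

Definition insert_letter (r : seq nat) (x : nat) : seq nat * seq nat :=
  match Defs.bump x r with
  | None => (rcons r x, [::])
  | Some (y, r') => (r', [:: y])
  end.

Fixpoint insert_word (r W : seq nat) : seq nat * seq nat :=
  match W with
  | [::] => (r, [::])
  | x :: W' =>
      let p := insert_letter r x in
      let q := insert_word p.1 W' in (q.1, p.2 ++ q.2)
  end.

Lemma insert_word_cat r V1 V2 : insert_word r (V1 ++ V2) =
  ((insert_word (insert_word r V1).1 V2).1,
   (insert_word r V1).2 ++ (insert_word (insert_word r V1).1 V2).2).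
Proof.
elim: V1 r => [|x V1 IH] r /=; first by case: (insert_word r V2).
by rewrite IH /= catA.
Qed.

Lemma insert_word_rcons r V x : insert_word r (rcons V x) =
  ((insert_letter (insert_word r V).1 x).1,
   (insert_word r V).2 ++ (insert_letter (insert_word r V).1 x).2).
Proof. by rewrite -cats1 insert_word_cat /= cats0. Qed.

Lemma foldl_rs_insert_cons r t W : foldl rs_insert (r :: t) W =
  (insert_word r W).1 :: foldl rs_insert t (insert_word r W).2.
Proof.
elim: W r t => [|x W IH] r t //=.
by rewrite /insert_letter; case: (Defs.bump x r) => [[y r']|] /=; rewrite IH.
Qed.

Lemma P_cons W : W != [::] ->
  P W = (insert_word [::] W).1 :: P (insert_word [::] W).2.
Proof. by case: W => [|x W] //= _; rewrite /P /= foldl_rs_insert_cons. Qed.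

Definition count_in (s : seq nat) (y z : nat) : nat :=
  count (fun a => (y <= a) && (a < z)) s.

(* z is outcounted by V in R: some interval [y, z) contains more letters of V
   than of R. This characterises the letters bumped out of R by V. *)
Definition outcounted (R V : seq nat) (z : nat) : Prop :=
  exists2 y, y <= z & count_in R y z < count_in V y z.

Lemma count_in_rcons s x y z :
  count_in (rcons s x) y z = count_in s y z + ((y <= x) && (x < z)).
Proof. by rewrite /count_in -cats1 count_cat /= addn0. Qed.

Lemma count_in_split s y a z : y <= a -> a <= z ->
  count_in s y z = count_in s y a + count_in s a z.
Proof.
move=> h1 h2; rewrite /count_in; elim: s => [|t s IH] //=.
rewrite IH; case: (leqP y t); case: (ltnP t z); case: (ltnP t a); case: (leqP a t); lia.
Qed.

Lemma count_in0 s y z : (forall v, v \in s -> y <= v -> v < z -> False) ->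
  count_in s y z = 0.
Proof.
move=> h; apply/eqP; rewrite -leqn0 leqNgt -has_count.
by apply/hasP => -[v hv /andP[h1 h2]]; exact: (h v hv h1 h2).
Qed.

Lemma count_in_pos s y z v : v \in s -> y <= v -> v < z -> 0 < count_in s y z.
Proof. by move=> hv h1 h2; rewrite -has_count; apply/hasP; exists v; rewrite ?h1. Qed.

Lemma count_in1 s y z a : uniq s -> a \in s -> y <= a -> a < z ->
  (forall v, v \in s -> y <= v -> v < z -> v = a) -> count_in s y z = 1.
Proof.
move=> hu ha h1 h2 h; rewrite /count_in (@eq_in_count _ _ (pred1 a)).
  by rewrite count_uniq_mem ?ha.
move=> v hv /=; apply/idP/idP; last by move/eqP->; rewrite h1 h2.
by case/andP => a1 a2; rewrite (h v hv a1 a2).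
Qed.

Lemma count_in_eq (s1 s2 : seq nat) y z : uniq s1 -> uniq s2 ->
  (forall a, y <= a -> a < z -> (a \in s1) = (a \in s2)) ->
  count_in s1 y z = count_in s2 y z.
Proof.
move=> u1 u2 h; rewrite /count_in -!size_filter; apply/perm_size/uniq_perm;
  try exact: filter_uniq.
move=> a; rewrite !mem_filter /=.
by case: (leqP y a) => h1 //=; case: (ltnP a z) => h2 //=; exact: h.
Qed.

Lemma outcounted_rcons R V x z : outcounted R V z -> outcounted R (rcons V x) z.
Proof.
by case=> y h1 h2; exists y; rewrite // count_in_rcons (leq_trans h2) ?leq_addr.
Qed.

Lemma outcounted_rconsP R V x z : outcounted R (rcons V x) z ->
  outcounted R V z \/ exists2 y, y <= x < z & count_in R y z <= count_in V y z.
Proof.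
case=> y hyz; rewrite count_in_rcons.
case: (boolP ((y <= x) && (x < z))) => [hx|_]; last by rewrite addn0; left; exists y.
by rewrite addn1 ltnS; right; exists y.
Qed.

(* Invariant of the insertion of V into the row R, with current row r' and
   bumped word o. The last field is the counting characterisation of the
   bumped letters; the previous one is what keeps o increasing. *)
Record insert_inv (R V r' o : seq nat) : Prop := InsertInv {
  inv_row_sorted : sorted ltn r';
  inv_perm : perm_eq (r' ++ o) (R ++ V);
  inv_bumped_sub : {subset o <= R};
  inv_bumped_sorted : sorted ltn o;
  inv_bumped_below : forall b z, b \in o -> z \in r' ->
    (forall v, v \in V -> v < z) -> b < z;
  inv_bumped_iff : forall z, z \in R -> (z \in o <-> outcounted R V z) }.

Lemma insert_inv_nil R : sorted ltn R -> insert_inv R [::] R [::].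
Proof. by move=> hR; split; rewrite // => z _; split => // -[y _]; rewrite /count_in. Qed.

Lemma insert_inv_mem R V r' o z : insert_inv R V r' o ->
  (z \in r') || (z \in o) = (z \in R) || (z \in V).
Proof. by move=> inv; rewrite -!mem_cat (perm_mem (inv_perm inv)). Qed.

Lemma insert_inv_disjoint R V r' o z : uniq (R ++ V) -> insert_inv R V r' o ->
  z \in r' -> z \in o -> False.
Proof.
move=> hRV inv h1 h2; move: hRV; rewrite -(perm_uniq (inv_perm inv)) cat_uniq.
by case/and3P => _ /hasP []; exists z.
Qed.

Section InsertStep.

Variables (R V R1 O : seq nat) (x : nat).
Hypotheses (hR : sorted ltn R) (hRV : uniq (R ++ V))
  (hVx : forall v, v \in V -> v < x) (hxR : x \notin R) (hxV : x \notin V)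
  (inv : insert_inv R V R1 O).

Lemma step_notin_row : x \notin R1.
Proof. by apply/negP => h; move: (insert_inv_mem x inv); rewrite h /= (negbTE hxR) (negbTE hxV). Qed.

Lemma step_in_row z : z \in R -> z \notin O -> z \in R1.
Proof. by move=> hz hzO; move: (insert_inv_mem z inv); rewrite hz (negbTE hzO) orbF. Qed.

Lemma insert_inv_append : (forall z, z \in R1 -> z < x) ->
  insert_inv R (rcons V x) (rcons R1 x) O.
Proof.
move=> hlt; have [i1 i2 i3 i4 i5 i6] := inv; split => //.
- by rewrite -cats1; apply: sorted_ltn_cat => // a b ha; rewrite inE => /eqP->; exact: hlt.
- by rewrite -!cats1 perm_catAC catA perm_cat2r.
- move=> o z ho; rewrite mem_rcons inE => /orP[/eqP->|hz] hv.
    by move: (hv x); rewrite mem_rcons inE eqxx ltnn => /(_ isT).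
  by move: (hv x); rewrite mem_rcons inE eqxx ltnNge (ltnW (hlt _ hz)) => /(_ isT).
move=> z hzR; split; first by move/(i6 _ hzR); apply: outcounted_rcons.
case/outcounted_rconsP => [/(i6 _ hzR)//|[y /andP[_ hxz] _]].
case: (boolP (z \in O)) => // hzO.
by move: (hlt _ (step_in_row hzR hzO)); rewrite ltnNge (ltnW hxz).
Qed.

Variables (y : nat) (r' : seq nat).
Hypotheses (hy : y \in R1) (hxy : x < y) (hmin : forall z, z \in R1 -> x < z -> y <= z)
  (hp : perm_eq (x :: R1) (y :: r')) (hr' : sorted ltn r').

(* Otherwise x bumps y out of the row, leaving the row r'. The bumped letter
   comes from R, since the letters of V are smaller than x. *)
Lemma bumped_in_R : y \in R.
Proof.
move: (insert_inv_mem y inv); rewrite hy /= => /esym /orP[//|hv].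
by move: (ltn_trans (hVx hv) hxy); rewrite ltnn.
Qed.

(* The letter bumped by x is outcounted: either some letter zz of R between x
   and y was already bumped (and y inherits its witness), or [x, y) contains
   x and no letter of R. *)
Lemma bumped_outcounted : outcounted R (rcons V x) y.
Proof.
have [_ _ _ _ _ i6] := inv.
have hV0 a v : x < a -> v \in V -> a <= v -> False.
  by move=> hxa hv hav; move: (leq_trans hav (ltnW (hVx hv))); rewrite leqNgt hxa.
case: (boolP (has (fun a => (x < a) && (a < y)) R)) => hh; last first.
  exists x; first exact: ltnW.
  rewrite count_in_rcons leqnn hxy /= (@count_in0 R) ?addn1 // => v hv h1 h2.
  move/hasPn: hh => /(_ v hv) /=; rewrite h2 andbT ltn_neqAle h1 andbT.
  by case: eqP => // e; move: hxR; rewrite e hv.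
have exP : exists a, (a \in R) && ((x < a) && (a < y)).
  by case/hasP: hh => a ha hP; exists a; rewrite ha.
have ubP a : (a \in R) && ((x < a) && (a < y)) -> a <= y by case/and3P => _ _ /ltnW.
case: (ex_maxnP exP ubP) => zz /and3P[hzzR hxzz hzzy] hmax.
have hzzO : zz \in O.
  case: (boolP (zz \in O)) => // hzzO.
  by move: (hmin (step_in_row hzzR hzzO) hxzz); rewrite leqNgt hzzy.
case/(i6 _ hzzR): hzzO => y' hy'zz hcnt.
have hy'x : y' <= x.
  rewrite leqNgt; apply/negP => hxy'.
  by move: hcnt; rewrite (@count_in0 V) // => v hv h1 _; apply: (hV0 y' v).
exists y'; first exact: leq_trans (ltnW hxy).
rewrite count_in_rcons (@count_in_split R y' zz y) ?(ltnW hzzy) //.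
rewrite (@count_in_split V y' zz y) ?(ltnW hzzy) //.
rewrite (@count_in0 V zz y); last by move=> v hv h1 _; apply: (hV0 zz v).
rewrite (@count_in1 R zz y zz) ?(sorted_ltn_uniq hR) //; last first.
  move=> v hv h1 h2; apply/eqP; rewrite eqn_leq h1 andbT; apply: hmax.
  by rewrite hv h2 (leq_trans hxzz h1).
by rewrite hy'x hxy /=; move: hcnt; clear; lia.
Qed.

(* After the bump, a letter z > y of the row is still not outcounted: a
   witness for z would also be one for y, which was not bumped before. *)
Lemma insert_inv_bump : insert_inv R (rcons V x) r' (rcons O y).
Proof.
have [i1 i2 i3 i4 i5 i6] := inv.
have hyO : y \notin O by apply/negP; exact: insert_inv_disjoint hRV inv hy.
have hyR := bumped_in_R.
have hr'mem z : z \in r' -> z != x -> (z \in R1) && (z != y).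
  move=> hz hzx; have : z \in x :: R1 by rewrite (perm_mem hp) inE hz orbT.
  have /andP[hny _] : uniq (y :: r').
    by rewrite -(perm_uniq hp) /= step_notin_row (sorted_ltn_uniq i1).
  rewrite inE (negbTE hzx) /= => ->; apply/eqP => e; move: hny; by rewrite -e hz.
split => //.
- apply: (@perm_trans _ (y :: r' ++ O)); first by rewrite -cats1 catA cats1 perm_rcons.
  apply: (@perm_trans _ (x :: R1 ++ O)); first by have := hp; rewrite -(perm_cat2r O) perm_sym.
  apply: (@perm_trans _ (x :: R ++ V)); first by rewrite perm_cons.
  by rewrite -cats1 catA cats1 perm_sym perm_rcons.
- by move=> z; rewrite mem_rcons inE => /orP[/eqP->|/i3].
- rewrite -cats1; apply: sorted_ltn_cat => // o z ho; rewrite inE => /eqP->.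
  by apply: i5 => // v hv; exact: ltn_trans (hVx hv) hxy.
- move=> o z; rewrite mem_rcons inE => ho hz hvz.
  have hxz : x < z by apply: hvz; rewrite mem_rcons inE eqxx.
  have /andP[hzR1 hzy] := hr'mem z hz (negbT (gtn_eqF hxz)).
  have hyz : y < z by rewrite ltn_neqAle eq_sym hzy hmin.
  case/orP: ho => [/eqP->//|ho].
  by apply: i5 => // v hv; exact: ltn_trans (hVx hv) hxz.
move=> z hzR; rewrite mem_rcons inE; split.
  by case/orP => [/eqP->|/(i6 _ hzR)]; [exact: bumped_outcounted | exact: outcounted_rcons].
case/outcounted_rconsP => [/(i6 _ hzR) hzO|[y' /andP[hy'x hxz] hc]].
  by apply/orP; right.
case: (boolP (z \in O)) => hzO; first by apply/orP; right.
have hyz := hmin (step_in_row hzR hzO) hxz.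
case: (ltngtP y z) => [hlt|hgt|//]; last by move: hyz; rewrite leqNgt hgt.
(* Otherwise y < z and [y', y) would already witness that y was outcounted. *)
suff : y \in O by rewrite (negbTE hyO).
apply/(i6 _ hyR); exists y'; first exact: leq_trans (ltnW hxy).
move: hc; rewrite (@count_in_split R y' y z) ?(leq_trans hy'x (ltnW hxy)) ?(ltnW hlt) //.
rewrite (@count_in_split V y' y z) ?(leq_trans hy'x (ltnW hxy)) ?(ltnW hlt) //.
rewrite (@count_in0 V y z); last first.
  by move=> v hv h1 _; move: (leq_ltn_trans h1 (ltn_trans (hVx hv) hxy)); rewrite ltnn.
have := count_in_pos hyR (leqnn y) hlt; clear; lia.
Qed.

End InsertStep.

Lemma insert_word_inv R V : sorted ltn R -> sorted ltn V -> uniq (R ++ V) ->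
  insert_inv R V (insert_word R V).1 (insert_word R V).2.
Proof.
move=> hR; elim/last_ind: V => [|V x IH] hVx hu; first exact: insert_inv_nil.
have [hV hlt] := sorted_ltn_rcons hVx.
have hRV : uniq (R ++ V) by move: hu; rewrite -cats1 catA cat_uniq; case/and3P.
have /andP[hxR hxV] : (x \notin R) && (x \notin V).
  by move: hu; rewrite -cats1 catA cat_uniq /= orbF mem_cat negb_or; case/and3P.
have inv := IH hV hRV.
rewrite insert_word_rcons /= /insert_letter.
move: (bump_spec (inv_row_sorted inv) (step_notin_row hxR hxV inv)).
case: (Defs.bump x _) => [[y r']|] /=; last by rewrite cats0; exact: insert_inv_append.
case=> hy hxy hmin hp hr'; rewrite cats1.
exact: (insert_inv_bump hR hRV hlt hxR hxV inv hy hxy hmin hp hr').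
Qed.

Definition in_range (a : seq nat) (m : nat) : bool := all (fun x => 0 < x <= m) a.

Lemma mem_kpow a m k z :
  reflect (exists2 t, t < k & exists2 x, x \in a & z = t * m + x) (z \in kpow a m k).
Proof.
apply: (iffP flatten_mapP).
  case=> t; rewrite mem_iota add0n => /andP[_ ht] /mapP [x hx ->].
  by exists t => //; exists x.
case=> t ht [x hx ->]; exists t; first by rewrite mem_iota add0n ht.
by apply/mapP; exists x.
Qed.

Lemma mulD_inj m t x t' x' : 0 < x <= m -> 0 < x' <= m ->
  t * m + x = t' * m + x' -> t = t' /\ x = x'.
Proof.
move=> /andP[h1 h2] /andP[h3 h4] e.
case: (ltngtP t t') => ht.
- have : t.+1 * m <= t' * m by rewrite leq_mul2r ht orbT.
  by rewrite mulSn; lia.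
- have : t'.+1 * m <= t * m by rewrite leq_mul2r ht orbT.
  by rewrite mulSn; lia.
- by subst; split => //; lia.
Qed.

Lemma kpow_bound a m k z : in_range a m -> z \in kpow a m k -> 0 < z <= k * m.
Proof.
move=> ha /mem_kpow [t ht [x hx ->]].
move/allP: ha => /(_ x hx) /andP[h1 h2].
have : t.+1 * m <= k * m by rewrite leq_mul2r ht orbT.
by rewrite mulSn; lia.
Qed.

Lemma shiftw_sorted a c : sorted ltn a -> sorted ltn (shiftw a c).
Proof.
by move=> ha; rewrite /shiftw sorted_map; apply: sub_sorted ha => x y /=; rewrite ltn_add2l.
Qed.

Lemma kpowS a m k : kpow a m k.+1 = kpow a m k ++ shiftw a (k * m).
Proof. by rewrite /kpow -addn1 iotaD map_cat flatten_cat /= cats0 add0n. Qed.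

Lemma kpow_shift u c m k : kpow (shiftw u c) m k = shiftw (kpow u m k) c.
Proof.
rewrite /kpow /shiftw map_flatten -map_comp; congr flatten; apply: eq_map => i /=.
by rewrite -!map_comp; apply: eq_map => x /=; lia.
Qed.

Lemma kpow_sorted a m k : sorted ltn a -> in_range a m -> sorted ltn (kpow a m k).
Proof.
move=> ha hr; elim: k => [|k IH] //.
rewrite kpowS; apply: sorted_ltn_cat => //; first exact: shiftw_sorted.
move=> x y hx /mapP [z hz ->].
move: (kpow_bound hr hx) => /andP[_ h]; move/allP: hr => /(_ z hz) /andP[h1 _].
lia.
Qed.

Lemma in_range_modn_inj m x x' : 0 < x <= m -> 0 < x' <= m ->
  x %% m = x' %% m -> x = x'.
Proof.
move=> /andP[h1 h2] /andP[h3 h4].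
case: (ltnP x m) => hx; case: (ltnP x' m) => hx'.
- by rewrite !modn_small.
- have -> : x' = m by lia.
  by rewrite modnn modn_small //; lia.
- have -> : x = m by lia.
  by rewrite modnn modn_small //; lia.
- lia.
Qed.

(* Every window [y, y + m) inside [1, k m] contains exactly one letter of
   a^(k) per letter of a: reduction modulo m is a bijection from the letters
   of a^(k) in the window onto the letters of a (modulo m). *)
Lemma count_window a m k y : 0 < m -> sorted ltn a -> in_range a m -> 0 < y ->
  y + m <= k * m + 1 -> count_in (kpow a m k) y (y + m) = size a.
Proof.
move=> hm hs hr hy hyk.
rewrite /count_in -size_filter.
rewrite -(size_map (modn^~ m)) -(size_map (modn^~ m) a).
apply/perm_size/uniq_perm.
- rewrite map_inj_in_uniq; first by apply/filter_uniq/sorted_ltn_uniq/kpow_sorted.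
  move=> z z'; rewrite !mem_filter => /andP[/andP[h1 h2] _] /andP[/andP[h3 h4] _] e.
  wlog hzz : z z' h1 h2 h3 h4 e / z <= z'.
    by move=> H; case: (leqP z z') => [|/ltnW] h; [|apply/esym]; apply: H.
  have : m %| z' - z by rewrite -eqn_mod_dvd // e.
  case: (posnP (z' - z)) => d0; first by lia.
  by move/(dvdn_leq d0); lia.
- rewrite map_inj_in_uniq; first exact: sorted_ltn_uniq.
  by move=> x x' hx hx'; apply: in_range_modn_inj; apply: (allP hr).
move=> r; apply/mapP/mapP.
  case=> z; rewrite mem_filter => /andP[_ /mem_kpow [t _ [x hx ->]]] ->.
  by exists x => //; rewrite modnMDl.
case=> x hx ->; move/allP: hr => /(_ x hx) /andP[hx1 hx2].
set t := (y + m - 1 - x) %/ m.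
have hN := divn_eq (y + m - 1 - x) m; have hrem := ltn_pmod (y + m - 1 - x) hm.
have ht : t < k by rewrite -(ltn_pmul2r hm); rewrite -/t in hN; lia.
exists (t * m + x); last by rewrite modnMDl.
rewrite mem_filter; apply/andP; split; last by apply/mem_kpow; exists t => //; exists x.
by rewrite -/t in hN; apply/andP; split; lia.
Qed.

Definition agree_above (m k : nat) (C u : seq nat) (t : nat) : Prop :=
  forall z, t * m < z -> (z \in C) = (z \in kpow u m k).

Lemma agree_above_mono m k C u t t' : t <= t' ->
  agree_above m k C u t -> agree_above m k C u t'.
Proof. by move=> htt h z hz; apply: h; apply: leq_ltn_trans hz; rewrite leq_mul2r htt orbT. Qed.

Section InsertAgree.

Variables (m k th : nat) (R V u v : seq nat).
Hypotheses (hm : 0 < m) (su : sorted ltn u) (sv : sorted ltn v)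
  (ru : in_range u m) (rv : in_range v m) (huv : forall x, x \in u -> x \notin v)
  (hsz : size u <= size v)
  (tR : agree_above m k R u th) (tV : agree_above m k V v th).

(* Above (th + 1) m, a letter z of R is outcounted by V: the window
   [z + 1 - m, z + 1) holds |u| letters of R, including z, and |v| >= |u|
   letters of V, none of them equal to z. *)
Lemma outcounted_above z : uniq R -> uniq V -> th.+1 * m < z -> z \in R ->
  outcounted R V z.
Proof.
move=> uR uV hz hzR.
have uku : uniq (kpow u m k) by apply/sorted_ltn_uniq/kpow_sorted.
have ukv : uniq (kpow v m k) by apply/sorted_ltn_uniq/kpow_sorted.
have hmz : th * m + m < z by move: hz; rewrite mulSn addnC.
have hzu : z \in kpow u m k by rewrite -tR // (leq_ltn_trans (leq_addr m _) hmz).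
have /andP[_ hzk] := kpow_bound ru hzu.
move def_y : (z.+1 - m) => y.
have hyz : y + m = z.+1 by move: hmz def_y; clear; lia.
have hthy : th * m < y by move: hmz hyz; clear; lia.
have hyz' : y <= z by move: hm hyz; clear; lia.
have hcR : count_in R y z = count_in (kpow u m k) y z.
  by apply: count_in_eq => // a h1 _; apply: tR; exact: leq_trans h1.
have hcV : count_in V y z = count_in (kpow v m k) y z.
  by apply: count_in_eq => // a h1 _; apply: tV; exact: leq_trans h1.
have hy0 : 0 < y by exact: leq_ltn_trans (leq0n _) hthy.
have hyk : y + m <= k * m + 1 by rewrite hyz addn1 ltnS.
have := count_window hm su ru hy0 hyk; have := count_window hm sv rv hy0 hyk.
rewrite hyz !(@count_in_split _ y z z.+1) //.
have -> : count_in (kpow u m k) z z.+1 = 1.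
  by apply: (count_in1 uku hzu) => // w _ h1 h2; apply/eqP; rewrite eqn_leq h1 -ltnS h2.
have -> : count_in (kpow v m k) z z.+1 = 0.
  apply: count_in0 => w hw h1 h2; have ew : w = z by apply/eqP; rewrite eqn_leq h1 -ltnS h2.
  move: hzu hw; rewrite ew => /mem_kpow [t _ [x hx ->]] /mem_kpow [t' _ [x' hx' e]].
  have [_ exx] := mulD_inj (allP ru _ hx) (allP rv _ hx') e.
  by move: (huv hx); rewrite exx hx'.
move=> wv wu; exists y => //.
by rewrite hcR hcV; move: wu wv hsz; clear; lia.
Qed.

Lemma insert_agree_step : sorted ltn R -> sorted ltn V -> uniq (R ++ V) ->
  agree_above m k (insert_word R V).1 v th.+1 /\
  agree_above m k (insert_word R V).2 u th.+1.
Proof.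
move=> hR hV hu.
have inv := insert_word_inv hR hV hu; have [_ _ hsub _ _ hiff] := inv.
set R1 := (insert_word R V).1; set O := (insert_word R V).2.
have bumped z : th.+1 * m < z -> z \in R -> z \in O.
  move=> hz hzR; apply/(hiff _ hzR).
  by apply: outcounted_above => //; apply: sorted_ltn_uniq.
have disRV z : z \in R -> z \in V -> False.
  by move=> h1 h2; move: hu; rewrite cat_uniq => /and3P[_ /hasP []]; exists z.
have hth : th * m <= th.+1 * m by rewrite leq_mul2r leqnSn orbT.
split => z hz.
- apply/idP/idP => h.
  + have : (z \in R) || (z \in V) by rewrite -(insert_inv_mem _ inv) h.
    case/orP => hh; last by rewrite -tV // (leq_ltn_trans hth hz).
    by case: (insert_inv_disjoint hu inv h (bumped _ hz hh)).
  + have hzV : z \in V by rewrite tV // (leq_ltn_trans hth hz).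
    have : (z \in R1) || (z \in O) by rewrite (insert_inv_mem _ inv) hzV orbT.
    by case/orP => // hO; case: (disRV _ (hsub _ hO) hzV).
- apply/idP/idP => h.
  + by rewrite -tR ?(hsub _ h) // (leq_ltn_trans hth hz).
  + by apply: bumped => //; rewrite tR // (leq_ltn_trans hth hz).
Qed.

End InsertAgree.

Record admissible (m : nat) (us : seq (seq nat)) : Prop := Admissible {
  adm_word : forall p, p < size us ->
    [/\ sorted ltn (nth [::] us p), in_range (nth [::] us p) m & 0 < size (nth [::] us p)];
  adm_disjoint : forall p q x, p < size us -> q < size us -> p != q ->
    x \in nth [::] us p -> x \notin nth [::] us q;
  adm_size : forall p, p.+1 < size us -> size (nth [::] us p) <= size (nth [::] us p.+1) }.

Lemma admissible_gt0 m us : admissible m us -> 0 < size us -> 0 < m.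
Proof.
move=> adm hn; have [_ ru nu] := adm_word adm hn.
by have /andP[h0 hm] := allP ru _ (mem_nth 0 nu); exact: leq_trans h0 hm.
Qed.

Lemma admissible_take m us n : admissible m us -> admissible m (take n us).
Proof.
case=> g1 g2 g3; split; rewrite size_take.
- by move=> p hp; rewrite nth_take; [apply: g1 | ]; case: ifP hp => h hp; lia.
- move=> p q x hp hq; rewrite !nth_take; first (apply: g2);
    by case: ifP hp hq => h hp hq; lia.
- move=> p hp; rewrite !nth_take; first (apply: g3);
    by case: ifP hp => h hp; lia.
Qed.

Definition bumped_agree (m k : nat) (us : seq (seq nat)) (s len : nat) (O : seq nat) :=
  exists Os : seq (seq nat), [/\ size Os = len, O = flatten Os,
    forall p, p < len -> sorted ltn (nth [::] Os p) &
    forall p, p < len -> agree_above m k (nth [::] Os p) (nth [::] us p) (s + p).+1].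

Lemma uniq_flatten_take (Cs : seq (seq nat)) q :
  uniq (flatten Cs) -> uniq (flatten (take q Cs)).
Proof. by rewrite -{1}(cat_take_drop q Cs) flatten_cat cat_uniq => /andP[]. Qed.

Section FirstRow.

Variables (m k s : nat) (us Cs : seq (seq nat)).
Hypotheses (hm : 0 < m) (adm : admissible m us) (hsize : size Cs = size us)
  (sC : forall p, p < size Cs -> sorted ltn (nth [::] Cs p)) (uC : uniq (flatten Cs))
  (tC : forall p, p < size Cs ->
          agree_above m k (nth [::] Cs p) (nth [::] us p) (s + p).-1).

Definition first_row_state (q : nat) : Prop :=
  let Q := insert_word [::] (flatten (take q Cs)) in
  [/\ sorted ltn Q.1, perm_eq (Q.1 ++ Q.2) (flatten (take q Cs)),
      bumped_agree m k us s q.-1 Q.2 &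
      agree_above m k Q.1 (nth [::] us q.-1) (if q == 1 then s.-1 else (s + q).-1)].

Lemma first_row_state1 : 0 < size Cs -> first_row_state 1.
Proof.
move=> hn; rewrite /first_row_state (take_nth [::] hn) take0 /= cats0.
have hC0 := sC hn.
have [i1 i2 i3 _ _ _] := @insert_word_inv [::] _ isT hC0 (sorted_ltn_uniq hC0).
have eO : (insert_word [::] (nth [::] Cs 0)).2 = [::].
  by case: (insert_word _ _).2 i3 => // a l /(_ a); rewrite !inE eqxx => /(_ isT).
move: i2; rewrite eO !cats0 => i2; split => //; first by exists [::].
by move=> z hz; rewrite (perm_mem i2) (tC hn) // addn0.
Qed.

(* Inserting C_q pushes the row's u_(q-1) tail into the bumped word and takes
   over the u_q tail (insert_agree_step). *)
Lemma first_row_stateS q : 0 < q -> q < size Cs ->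
  first_row_state q -> first_row_state q.+1.
Proof.
move=> hq0 hq; rewrite /first_row_state (take_nth [::] hq) flatten_rcons insert_word_cat.
set R := (insert_word [::] (flatten (take q Cs))).1.
set O := (insert_word [::] (flatten (take q Cs))).2.
set C := nth [::] Cs q.
case=> i1 i2 [Os [hOs eO sOs tOs]] tR.
have hCs : sorted ltn C by apply: sC.
have huRC : uniq (R ++ C).
  have := uniq_flatten_take q.+1 uC; rewrite (take_nth [::] hq) flatten_rcons cat_uniq.
  case/and3P => _ /hasPn hn _.
  rewrite cat_uniq (sorted_ltn_uniq i1) (sorted_ltn_uniq hCs) andbT /=.
  apply/hasPn => x /hn.
  by rewrite /= -(perm_mem i2) mem_cat negb_or => /andP[].
have hqu : q < size us by rewrite -hsize.
have hq1u : q.-1 < size us := leq_ltn_trans (leq_pred q) hqu.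
have [su ru _] := adm_word adm hq1u.
have [sv rv _] := adm_word adm hqu.
have huv x : x \in nth [::] us q.-1 -> x \notin nth [::] us q.
  by apply: (adm_disjoint adm) => //; rewrite neq_ltn ltn_predL hq0.
have hsuv : size (nth [::] us q.-1) <= size (nth [::] us q).
  by have := @adm_size _ _ adm q.-1; rewrite prednK //; apply.
have tR' : agree_above m k R (nth [::] us q.-1) (s + q).-1.
  by apply: agree_above_mono tR; case: ifP => _; rewrite // -!subn1 leq_sub2r ?leq_addr.
have [tR2 tB] := insert_agree_step hm su sv ru rv huv hsuv tR' (tC hq) i1 hCs huRC.
have [j1 j2 _ j4 _ _] := insert_word_inv i1 hCs huRC.
split => //=.
- rewrite catA; apply: (@perm_trans _ ((R ++ C) ++ O)); first by rewrite perm_catAC perm_cat2r.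
  by rewrite perm_catAC perm_cat2r.
- exists (rcons Os (insert_word R C).2); split.
  + by rewrite size_rcons hOs prednK.
  + by rewrite eO flatten_rcons.
  + by move=> p hp; rewrite nth_rcons hOs; case: ltngtP => hpq //; exact: sOs.
  + move=> p hp; rewrite nth_rcons hOs; case: ltngtP => hpq; first exact: tOs.
      by move: hp; rewrite -(prednK hq0) ltnS leqNgt hpq.
    by rewrite hpq; apply: agree_above_mono tB; move: hq0; clear; lia.
- have -> : (q.+1 == 1) = false by rewrite eqSS; apply/negbTE; rewrite -lt0n.
  by apply: agree_above_mono tR2; move: hq0; clear; lia.
Qed.

Lemma first_row_agree : 0 < size Cs -> first_row_state (size Cs).
Proof.
move=> hn; suff : forall q, 0 < q <= size Cs -> first_row_state q by apply; rewrite hn leqnn.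
elim=> [//|q IH] /andP[_ hq].
case: (posnP q) => [->|hq0]; first exact: first_row_state1.
by apply: first_row_stateS => //; apply: IH; rewrite hq0 ltnW.
Qed.

End FirstRow.

(* A word agreeing with u^(k) (u nonempty) above t m, t < k, is nonempty:
   it contains the letter t m + u_1. *)
Lemma agree_above_nonempty m k t (C u : seq nat) : 0 < size u -> in_range u m ->
  t < k -> agree_above m k C u t -> C != [::].
Proof.
move=> hu ru ht tC; have hx := mem_nth 0 hu; have /andP[hx0 _] := allP ru _ hx.
have : t * m + nth 0 u 0 \in C.
  rewrite tC; last by rewrite -{1}(addn0 (t * m)) ltn_add2l.
  by apply/mem_kpow; exists t => //; exists (nth 0 u 0).
by apply: contraTneq => ->.
Qed.

(* Threshold (in periods of m) above which row p of the tableau agrees with a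
   tail, when n words are inserted and the first one starts at shift s. *)
Definition row_threshold (s n p : nat) : nat :=
  if n - p == 1 then (s + 2 * p).-1 else (s + n + p).-1.

Lemma row_threshold_inner j i : 1 <= i <= j - 1 -> row_threshold 0 j (i - 1) = j - 2 + i.
Proof. by rewrite /row_threshold; case: ifP => /eqP; lia. Qed.

Lemma row_threshold_last j : 2 <= j -> row_threshold 0 j (j - 1) = 2 * j - 3.
Proof. by rewrite /row_threshold; case: ifP => /eqP; lia. Qed.

Lemma row_thresholdS s n p : row_threshold (s + 2) n p = row_threshold s n.+1 p.+1.
Proof. by rewrite /row_threshold subSS; case: ifP => _; lia. Qed.

(* The whole tableau: by induction on the number of words, the first row
   comes from first_row_agree and the remaining rows are the tableau of the
   bumped word, whose pieces agree with u_0, ..., u_(n-2) two periods higher. *)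
Lemma tableau_agree m k : 0 < m -> 0 < k -> forall n s us Cs,
  size us = n -> size Cs = n -> admissible m us ->
  (forall p, p < n -> sorted ltn (nth [::] Cs p)) -> uniq (flatten Cs) ->
  all (fun z => 0 < z) (flatten Cs) -> s + 2 * n <= k + 2 ->
  (forall p, p < n -> agree_above m k (nth [::] Cs p) (nth [::] us p) (s + p).-1) ->
  size (P (flatten Cs)) = n /\
  forall p, p < n ->
    [/\ sorted ltn (nth [::] (P (flatten Cs)) p),
        all (fun z => 0 < z) (nth [::] (P (flatten Cs)) p) &
        agree_above m k (nth [::] (P (flatten Cs)) p) (nth [::] us (n - p - 1))
          (row_threshold s n p)].
Proof.
move=> hm hk0; elim=> [|n IH] s us Cs hus hCs adm sC uC pC hk tC.
  by rewrite (size0nil hCs).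
have hne : flatten Cs != [::].
  have [_ ru nu] := adm_word adm (ltac:(by rewrite hus) : 0 < size us).
  have ht : (s + 0).-1 < k by move: hk hk0; clear; lia.
  have := agree_above_nonempty nu ru ht (tC 0 isT).
  by case: (Cs) => [|C Cs'] //=; case: C.
have [i1 i2 [Os [hOs eO sOs tOs]] tR] :
    first_row_state m k s us Cs (size Cs).
  by apply: first_row_agree; rewrite ?hCs ?hus.
rewrite take_size hCs /= in i1 i2 eO tR hOs sOs tOs.
set R := (insert_word [::] (flatten Cs)).1 in i1 i2 tR.
set O := (insert_word [::] (flatten Cs)).2 in i2 eO.
have memR x : x \in R -> x \in flatten Cs by move=> hx; rewrite -(perm_mem i2) mem_cat hx.
have memO x : x \in O -> x \in flatten Cs by move=> hx; rewrite -(perm_mem i2) mem_cat hx orbT.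
have uO : uniq (flatten Os).
  by rewrite -eO; move: uC; rewrite -(perm_uniq i2) cat_uniq => /and3P[].
have pO : all (fun z => 0 < z) (flatten Os).
  by rewrite -eO; apply/allP => x /memO hx; exact: (allP pC).
have hus' : size (take n us) = n by rewrite size_take hus ltnSn.
have [hsize hrows] := IH (s + 2) (take n us) Os hus' hOs (admissible_take n adm)
  sOs uO pO ltac:(move: hk; clear; lia)
  ltac:(move=> p hp; rewrite nth_take //; apply: agree_above_mono (tOs p hp); clear; lia).
rewrite P_cons // -/R -/O eO; split; first by rewrite /= hsize.
case=> [|p] hp /=.
  split => //; first by apply/allP => x /memR hx; exact: (allP pC).
  by rewrite subn0 subn1 /row_threshold subn0 muln0 addn0 addnC.
have [r1 r2 r3] := hrows p hp; split => //.
rewrite -row_thresholdS subSS -(nth_take _ (_ : n - p - 1 < n)) //.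
by move: hp; clear; lia.
Qed.

Lemma sorted_ltn_split (s : seq nat) c : sorted ltn s ->
  s = filter (fun a => a <= c) s ++ filter (fun a => c < a) s.
Proof.
elim: s => [|x s IH] //= hs.
have /andP[hall hs'] : all (ltn x) s && sorted ltn s.
  by move: hs; rewrite /= path_sortedE //; exact: ltn_trans.
case: (leqP x c) => hx /=; first by rewrite -IH.
rewrite (@eq_in_filter _ _ pred0) ?filter_pred0 /=; last first.
  by move=> a ha /=; apply/negbTE; rewrite -ltnNge; exact: ltn_trans hx (allP hall _ ha).
congr (_ :: _); apply/esym/all_filterP.
by apply/allP => a ha; exact: ltn_trans hx (allP hall _ ha).
Qed.

Lemma split_agree_row m k (row u : seq nat) t : sorted ltn row -> sorted ltn u ->
  in_range u m -> agree_above m k row u t -> all (fun z => 0 < z) row ->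
  exists x, [/\ sorted ltn x, all (fun a => 0 < a <= t * m) x &
                row = x ++ kpow (shiftw u (t * m)) m (k - t)].
Proof.
move=> hr hu ru tr pr.
exists (filter (fun a => a <= t * m) row); split.
- by apply: sorted_filter => //; exact: ltn_trans.
- by apply/allP => a; rewrite mem_filter => /andP[-> /(allP pr)->].
rewrite {1}(sorted_ltn_split (t * m) hr); congr (_ ++ _).
apply: (irr_sorted_eq ltn_trans ltnn).
- by apply: sorted_filter => //; exact: ltn_trans.
- by rewrite kpow_shift; apply/shiftw_sorted/kpow_sorted.
move=> z; rewrite mem_filter; apply/andP/mem_kpow.
- case=> hz; rewrite (tr _ hz) => /mem_kpow [t' ht' [a ha ez]].
  have /andP[a1 a2] := allP ru _ ha.
  have htt : t <= t'.
    rewrite leqNgt; apply/negP => h.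
    have : t'.+1 * m <= t * m by rewrite leq_mul2r h orbT.
    by rewrite mulSn; move: ez hz a2; clear; lia.
  have e1 : (t' - t) * m = t' * m - t * m by rewrite mulnBl.
  have e2 : t * m <= t' * m by rewrite leq_mul2r htt orbT.
  exists (t' - t); first by move: ht' htt; clear; lia.
  exists (t * m + a); first by apply/mapP; exists a.
  by rewrite e1; move: ez e2; clear; lia.
- case=> t' ht' [a' /mapP [a ha ->] ->].
  have /andP[a1 a2] := allP ru _ ha.
  have hz : t * m < t' * m + (t * m + a) by move: a1; clear; lia.
  split => //; rewrite (tr _ hz).
  apply/mem_kpow; exists (t' + t); first by move: ht'; clear; lia.
  by exists a => //; rewrite mulnDl; clear; lia.
Qed.

Lemma uniq_flatten_disjoint (Cs : seq (seq nat)) :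
  (forall p, p < size Cs -> uniq (nth [::] Cs p)) ->
  (forall p q x, p < size Cs -> q < size Cs -> p != q ->
     x \in nth [::] Cs p -> x \notin nth [::] Cs q) ->
  uniq (flatten Cs).
Proof.
elim: Cs => [|C Cs IH] //= hu hd.
rewrite cat_uniq (hu 0 isT) /=; apply/andP; split.
- apply/hasPn => x /flattenP [D hD hxD]; apply/negP => hxC.
  move: hD => /(nthP [::]) [q hq eq]; subst D.
  by move: (hd 0 q.+1 x isT hq isT hxC); rewrite /= hxD.
- apply: IH => [p hp|p q x hp hq hpq]; first exact: (hu p.+1).
  exact: (hd p.+1 q.+1).
Qed.

Theorem kpow_tableau m k us : 0 < m -> 0 < k -> admissible m us ->
  2 * size us <= k + 2 ->
  let n := size us in
  let T := P (flatten [seq kpow u m k | u <- us]) in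
  size T = n /\
  forall p, p < n -> let t := row_threshold 0 n p in
    exists x, [/\ sorted ltn x, all (fun a => 0 < a <= t * m) x &
      nth [::] T p = x ++ kpow (shiftw (nth [::] us (n - p - 1)) (t * m)) m (k - t)].
Proof.
move=> hm hk0 adm hk n T.
set Cs := [seq kpow u m k | u <- us].
have hCs : size Cs = n by rewrite size_map.
have eCs p : p < n -> nth [::] Cs p = kpow (nth [::] us p) m k.
  by move=> hp; rewrite (nth_map [::]).
have sC p : p < n -> sorted ltn (nth [::] Cs p).
  by move=> hp; have [su ru _] := adm_word adm hp; rewrite eCs //; exact: kpow_sorted.
have uC : uniq (flatten Cs).
  apply: uniq_flatten_disjoint => [p|p q x]; rewrite hCs.
    by move=> hp; exact/sorted_ltn_uniq/sC.
  move=> hp hq hpq.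
  have [_ rp _] := adm_word adm hp; have [_ rq _] := adm_word adm hq.
  rewrite !eCs // => /mem_kpow [t _ [a ha ->]]; apply/negP => /mem_kpow [t' _ [a' ha' e]].
  have [_ eaa] := mulD_inj (allP rp _ ha) (allP rq _ ha') e.
  by move: (adm_disjoint adm hp hq hpq ha); rewrite eaa ha'.
have pC : all (fun z => 0 < z) (flatten Cs).
  apply/allP => x /flattenP [C /(nthP [::]) [p hp <-]]; rewrite hCs in hp.
  have [_ rp _] := adm_word adm hp.
  by rewrite eCs // => /(kpow_bound rp) /andP[].
have [hsize hrows] := @tableau_agree m k hm hk0 n 0 us Cs (erefl n) hCs adm sC uC pC hk
  ltac:(by move=> p hp z _; rewrite eCs).
split => // p hp t.
have [r1 r2 r3] := hrows p hp.
have [su ru _] := adm_word adm (ltac:(move: hp; clear; lia) : n - p - 1 < n).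
exact: split_agree_row r1 su ru r3 r2.
Qed.

Lemma mem_nth_flatten (Cs : seq (seq nat)) p x : p < size Cs ->
  x \in nth [::] Cs p -> x \in flatten Cs.
Proof. by move=> hp hx; apply/flattenP; exists (nth [::] Cs p); rewrite ?mem_nth. Qed.

Lemma uniq_flatten_nth_disjoint (Cs : seq (seq nat)) p q x : uniq (flatten Cs) ->
  p < size Cs -> q < size Cs -> p != q -> x \in nth [::] Cs p -> x \notin nth [::] Cs q.
Proof.
elim: Cs p q => [|C Cs IH] p q //=; rewrite cat_uniq => /and3P[_ hn uCs].
case: p => [|p]; case: q => [|q] //= hp hq hpq hx.
- by apply/negP => hy; move/hasPn: hn => /(_ x (mem_nth_flatten hq hy)); rewrite hx.
- by apply/negP => hy; move/hasPn: hn => /(_ x (mem_nth_flatten hp hx)); rewrite hy.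
- exact: (IH p q uCs hp hq hpq hx).
Qed.

Lemma skew_rows_admissible mu rows j : is_standard_skew_tableau mu rows ->
  all (fun r => 0 < size r) rows -> sorted geq [seq size r | r <- rows] ->
  j <= size rows ->
  admissible (size (flatten rows)) [seq nth [::] rows (size rows - i) | i <- iota 1 j].
Proof.
case=> _ [_ _ hperm hrs _] hne hsz hj; set b := size rows.
have uR : uniq (flatten rows) by rewrite (perm_uniq hperm) iota_uniq.
have eus p : p < j -> nth [::] [seq nth [::] rows (b - i) | i <- iota 1 j] p =
                      nth [::] rows (b - p.+1).
  by move=> hp; rewrite (nth_map 0) ?size_iota // nth_iota // add1n.
have hrow p : p < j -> b - p.+1 < b by move: hj; clear; lia.
split; rewrite size_map size_iota.
- move=> p hp; rewrite eus //; have hr := mem_nth [::] (hrow p hp); split.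
  + exact: (allP hrs).
  + apply/allP => x hx; have := mem_nth_flatten (hrow p hp) hx.
    by rewrite (perm_mem hperm) mem_iota; clear; lia.
  + exact: (allP hne).
- move=> p q x hp hq hpq; rewrite !eus //.
  by apply: uniq_flatten_nth_disjoint; rewrite ?hrow //; move: hp hq hpq hj; clear; lia.
- move=> p hp; rewrite !eus //; last exact: ltnW.
  have geq_trans : transitive geq by move=> a c d h1 h2; exact: leq_trans h2 h1.
  have := sorted_ltn_nth geq_trans 0 hsz.
  move=> /(_ (b - p.+2) (b - p.+1)); rewrite !inE size_map -/b !(nth_map [::]) -?/b;
    try (by move: hp hj; clear; lia); apply; move: hp hj; clear; lia.
Qed.

Theorem mainTheorem9 (mu : seq nat) (rows : seq (seq nat)) :
  is_standard_skew_tableau mu rows ->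
  all (fun r => 0 < size r) rows ->
  sorted geq [seq size r | r <- rows] ->
  let b := size rows in
  let m := size (flatten rows) in
  let w := fun i => nth [::] rows (b - i) in
  forall j k, 2 <= j <= b -> 2 * b - 2 <= k ->
  let T := P (flatten [seq kpow (w i) m k | i <- iota 1 j]) in
  size T = j /\
  (forall i, 1 <= i <= j - 1 ->
     exists x : seq nat,
       [/\ sorted ltn x, all (fun a => 0 < a <= (j - 2 + i) * m) x &
           nth [::] T (i - 1) =
             x ++ kpow (shiftw (w (j + 1 - i)) ((j - 2 + i) * m)) m (k + 2 - j - i)]) /\
  (exists x : seq nat,
     [/\ sorted ltn x, all (fun a => 0 < a <= (j - 2 + j) * m) x &
         nth [::] T (j - 1) =
           x ++ kpow (shiftw (w 1) ((2 * j - 3) * m)) m (k + 3 - 2 * j)]).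
Proof.
move=> hS hne hsz b m w j k /andP[hj1 hj2] hk T.
set us := [seq w i | i <- iota 1 j].
have hus : size us = j by rewrite size_map size_iota.
have nth_us p : p < j -> nth [::] us p = w p.+1.
  by move=> hp; rewrite (nth_map 0) ?size_iota // nth_iota // add1n.
have adm : admissible m us := skew_rows_admissible hS hne hsz hj2.
have hm : 0 < m by apply: (admissible_gt0 adm); rewrite hus; move: hj1; clear; lia.
have [hsize hrows] := kpow_tableau hm (ltac:(move: hj1 hj2 hk; clear; lia) : 0 < k) adm
  (ltac:(rewrite hus; move: hj2 hk; clear; lia) : 2 * size us <= k + 2).
rewrite /T (_ : [seq kpow (w i) m k | i <- iota 1 j] = [seq kpow u m k | u <- us]);
  last by rewrite -map_comp.
rewrite hus in hrows; rewrite hsize hus; split => //; split.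
- move=> i /andP[hi1 hi2].
  have hp : i - 1 < j by move: hi1 hi2; clear; lia.
  have eidx : (j - (i - 1) - 1).+1 = j + 1 - i by move: hi1 hi2; clear; lia.
  have ek : k - (j - 2 + i) = k + 2 - j - i by move: hi1 hi2 hj2 hk; clear; lia.
  by have := hrows _ hp; rewrite /= row_threshold_inner ?hi1 // nth_us ?eidx ?ek //;
    move: hj1 hi1; clear; lia.
- have hp : j - 1 < j by move: hj1; clear; lia.
  have eidx : (j - (j - 1) - 1).+1 = 1 by move: hj1; clear; lia.
  have ek : k - (2 * j - 3) = k + 3 - 2 * j by move: hj1 hj2 hk; clear; lia.
  have := hrows _ hp; rewrite /= row_threshold_last // nth_us ?eidx ?ek //; last by move: hj1; clear; lia.
  case=> x [sx rx ex]; exists x; split => //; apply: sub_all rx => a /andP[-> /leq_trans]; apply.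
  by rewrite leq_mul2r; apply/orP; right; move: hj1; clear; lia.
Qed.
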